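(* Consider $N$ user devices indexed by $n\in\{1,\dots,N\}$ with positive weights $\rho_1,\dots,\rho_N>0$. For each $n$, let the dual confidence thresholds satisfy $0<\alpha_n^l<\alpha_n^u<1$, and let $\bar{\mathcal{U}}_n(\alpha_n^l,\alpha_n^u)>0$ be the limiting true positive rate of the dual-threshold early-exit classifier at device $n$ (defined in the context). Then the objective function $$F(\alpha^l,\alpha^u)=\sum_{n=1}^{N}\rho_n \ln\big(\bar{\mathcal{U}}_n(\alpha_n^l,\alpha_n^u)\big)$$ is monotonically decreasing with respect to the dual threshold variables $\alpha^l=(\alpha_1^l,\dots,\alpha_N^l)$ and $\alpha^u=(\alpha_1^u,\dots,\alpha_N^u)$, i.e. increasing any single threshold $\alpha_n^l$ or $\alpha_n^u$ (while keeping $\alpha_n^l<\alpha_n^u$ within $(0,1)$ and all other thresholds fixed) does not increase $F$.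
   Context: Setting. Device $n$ observes a sequence $\Phi_n$ of events $I_k$. Each event $I_k$ has a ground-truth label $y^{(k)}\in\{0,1\}$ ($1$ = critical, $0$ = normal) and, from a fixed $L$-layer classifier (independent of the thresholds), a sequence of confidence scores $C_1^{(k)},\dots,C_L^{(k)}\in[0,1]$. Given thresholds $(\alpha_n^l,\alpha_n^u)$, the predicted label $\hat y^{(k)}$ is: $\hat y^{(k)}=0$ if there is $q\le L$ with $C_q^{(k)}\le\alpha_n^l$ and $\alpha_n^l<C_t^{(k)}<\alpha_n^u$ for all $t<q$; $\hat y^{(k)}=1$ if there is $q\le L$ with $C_q^{(k)}\ge\alpha_n^u$ and $\alpha_n^l<C_t^{(k)}<\alpha_n^u$ for all $t<q$; and $\hat y^{(k)}=0$ if $\alpha_n^l<C_t^{(k)}<\alpha_n^u$ for all $t\le L$ (i.e. the first layer whose score leaves the open interval $(\alpha_n^l,\alpha_n^u)$ decides the label, and if none does the event is labeled normal). Let $\Phi_n^{P}=\{I_k\in\Phi_n: y^{(k)}=1\}$ (assumed nonempty) and $\hat\Phi_n^{TP}=\{I_k\in\Phi_n: y^{(k)}=1,\ \hat y^{(k)}=1\}$. The empirical utility (true positive rate) is $\mathcal{U}_n(\alpha_n^l,\alpha_n^u)=|\hat\Phi_n^{TP}|/|\Phi_n^{P}|$, and $\bar{\mathcal{U}}_n(\alpha_n^l,\alpha_n^u)=\lim_{|\Phi_n|\to\infty}\mathcal{U}_n(\alpha_n^l,\alpha_n^u)$ (assumed to exist). Standing assumption: $\bar{\mathcal{U}}_n>0$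 for all $n$, so the logarithm is defined. ''Monotonically decreasing'' is in the non-strict sense (non-increasing). *)

From Stdlib Require Import Reals List Classical ClassicalDescription.
Open Scope R_scope.

(* An event I_k: ground-truth label y (true = critical, false = normal) and
   confidence scores C_1 .. C_L given by [conf q] for 1 <= q <= L. *)
Record event := mkEvent { label : bool ; conf : nat -> R }.

Definition exits_normal (L : nat) (al au : R) (e : event) : Prop :=
  exists q, (1 <= q <= L)%nat /\ conf e q <= al /\
    forall t, (1 <= t < q)%nat -> al < conf e t < au.

Definition exits_critical (L : nat) (al au : R) (e : event) : Prop :=
  exists q, (1 <= q <= L)%nat /\ au <= conf e q /\
    forall t, (1 <= t < q)%nat -> al < conf e t < au.

Definition no_exit (L : nat) (al au : R) (e : event) : Prop :=
  forall t, (1 <= t <= L)%nat -> al < conf e t < au.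

(* Predicted label: 1 exactly in the critical-exit case, 0 otherwise
   (the other two cases of the paper). *)
Definition predicted (L : nat) (al au : R) (e : event) : bool :=
  if excluded_middle_informative (exits_critical L al au e) then true else false.

Fixpoint count_first (K : nat) (P : nat -> bool) : nat :=
  match K with
  | O => O
  | S K' => (count_first K' P + (if P K' then 1 else 0))%nat
  end.

Definition utility (L : nat) (Phi : nat -> event) (al au : R) (K : nat) : R :=
  INR (count_first K (fun k => andb (label (Phi k)) (predicted L al au (Phi k))))
  / INR (count_first K (fun k => label (Phi k))).

Definition sumR (N : nat) (f : nat -> R) : R :=
  fold_right Rplus 0 (map f (seq 0 N)).

Definition objective (N : nat) (rho : nat -> R) (Ubar : nat -> R -> R -> R)
  (al au : nat -> R) : R :=
  sumR N (fun n => rho n * ln (Ubar n (al n) (au n))).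

Definition admissible (N : nat) (al au : nat -> R) : Prop :=
  forall n, (n < N)%nat -> 0 < al n /\ al n < au n /\ au n < 1.

(** Raising either threshold can only destroy critical exits, never create
    them: raising [al] only makes earlier layers leave the band as normal,
    and if [au] is raised, an event that exits critically at the new
    thresholds already had a first layer at or above the old [au], where it
    exited critically before.  Hence every empirical true positive rate
    decreases, so do their limits, and [ln] together with the positive
    weights transports this to the objective. *)

From Stdlib Require Import Reals Lra Lia Arith List Classical ClassicalDescription.
Open Scope R_scope.

Lemma exits_critical_first_above (L : nat) (al au : R) (e : event) (q : nat) :
  (1 <= q <= L)%nat -> au <= conf e q ->
  (forall t, (1 <= t < q)%nat -> al < conf e t) ->
  exits_critical L al au e.
Proof.
  induction q as [q IH] using lt_wf_ind; intros Hq Hcq Hbelow.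
  destruct (classic (exists t, (1 <= t < q)%nat /\ au <= conf e t))
    as [[t [Ht Hct]] | Hnone].
  - apply (IH t); [lia | lia | exact Hct |].
    intros s Hs; apply Hbelow; lia.
  - exists q; split; [exact Hq | split; [exact Hcq |]].
    intros t Ht; split; [now apply Hbelow |].
    apply Rnot_le_lt; intro Hct; apply Hnone; now exists t.
Qed.

Lemma exits_critical_antimono (L : nat) (al au al' au' : R) (e : event) :
  al <= al' -> au <= au' ->
  exits_critical L al' au' e -> exits_critical L al au e.
Proof.
  intros Hal Hau [q [Hq [Hcq Hbelow]]].
  apply (exits_critical_first_above L al au e q Hq); [lra |].
  intros t Ht; specialize (Hbelow t Ht); lra.
Qed.

Lemma predicted_antimono (L : nat) (al au al' au' : R) (e : event) :
  al <= al' -> au <= au' ->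
  predicted L al' au' e = true -> predicted L al au e = true.
Proof.
  unfold predicted; intros Hal Hau.
  destruct (excluded_middle_informative (exits_critical L al' au' e)) as [Hc' | _];
    [| discriminate].
  destruct (excluded_middle_informative (exits_critical L al au e)) as [_ | Hnc];
    [reflexivity |].
  exfalso; apply Hnc; exact (exits_critical_antimono L al au al' au' e Hal Hau Hc').
Qed.

Lemma count_first_mono (K : nat) (P Q : nat -> bool) :
  (forall k, P k = true -> Q k = true) -> (count_first K P <= count_first K Q)%nat.
Proof.
  intro HPQ; induction K as [| K IH]; simpl; [lia |].
  destruct (P K) eqn:HP; [rewrite (HPQ K HP) | destruct (Q K)]; lia.
Qed.

Lemma utility_antimono (L : nat) (Phi : nat -> event) (al au al' au' : R) :
  al <= al' -> au <= au' -> forall K, utility L Phi al' au' K <= utility L Phi al au K.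
Proof.
  intros Hal Hau K; unfold utility.
  set (P := INR (count_first K (fun k => label (Phi k)))).
  assert (HTP : INR (count_first K (fun k => andb (label (Phi k)) (predicted L al' au' (Phi k))))
             <= INR (count_first K (fun k => andb (label (Phi k)) (predicted L al au (Phi k))))).
  { apply le_INR, count_first_mono; intro k.
    destruct (label (Phi k)); [simpl | discriminate].
    apply predicted_antimono; assumption. }
  destruct (Rle_lt_or_eq_dec 0 P (pos_INR _)) as [HP | HP].
  - unfold Rdiv; apply Rmult_le_compat_r; [left; now apply Rinv_0_lt_compat | exact HTP].
  - (* no positives among the first [K] events: both rates are the junk value [_ / 0 = 0] *)
    rewrite <- HP, !Rdiv_0_r; lra.
Qed.

Lemma sumR_le (N : nat) (f g : nat -> R) :
  (forall n, (n < N)%nat -> f n <= g n) -> sumR N f <= sumR N g.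
Proof.
  unfold sumR; intro Hfg.
  assert (Hin : forall n, In n (seq 0 N) -> f n <= g n).
  { intros n Hn; apply in_seq in Hn; apply Hfg; lia. }
  revert Hin; generalize (seq 0 N) as s.
  induction s as [| n s IH]; intro Hin; simpl; [lra |].
  apply Rplus_le_compat; [apply Hin; now left | apply IH; intros k Hk; apply Hin; now right].
Qed.

Lemma le_of_single_increase (f f' : nat -> R) (m : nat) :
  (forall n, n <> m -> f' n = f n) -> f m <= f' m -> forall n, f n <= f' n.
Proof.
  intros Hother Hm n; destruct (Nat.eq_dec n m) as [-> | Hnm]; [exact Hm |].
  rewrite (Hother n Hnm); apply Rle_refl.
Qed.

Section Objective.

Variables (N L : nat) (rho : nat -> R) (Phi : nat -> nat -> event)
  (Ubar : nat -> R -> R -> R).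
Hypothesis Hrho : forall n, (n < N)%nat -> 0 < rho n.
Hypothesis Hlim : forall n al au, (n < N)%nat -> 0 < al < au -> au < 1 ->
  Un_cv (utility L (Phi n) al au) (Ubar n al au).
Hypothesis Hgt0 : forall n al au, (n < N)%nat -> 0 < al < au -> au < 1 ->
  0 < Ubar n al au.

Lemma objective_antimono (al au al' au' : nat -> R) :
  admissible N al au -> admissible N al' au' ->
  (forall n, al n <= al' n) -> (forall n, au n <= au' n) ->
  objective N rho Ubar al' au' <= objective N rho Ubar al au.
Proof.
  intros Hadm Hadm' Hal Hau; apply sumR_le; intros n Hn.
  destruct (Hadm n Hn) as (H0 & Hlu & H1), (Hadm' n Hn) as (H0' & Hlu' & H1').
  assert (HU : Ubar n (al' n) (au' n) <= Ubar n (al n) (au n)).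
  { apply (Rle_cv_lim (utility_antimono L (Phi n) _ _ _ _ (Hal n) (Hau n)));
      apply Hlim; auto. }
  apply Rmult_le_compat_l; [now left; apply Hrho |].
  destruct (Rle_lt_or_eq_dec _ _ HU) as [Hlt | ->]; [| now right].
  left; apply ln_increasing; [apply Hgt0 |]; auto.
Qed.

End Objective.

Theorem theorem1
  (N L : nat) (rho : nat -> R) (Phi : nat -> nat -> event)
  (Ubar : nat -> R -> R -> R)
  (Hrho : forall n, (n < N)%nat -> 0 < rho n)
  (Hconf : forall n k q, (1 <= q <= L)%nat ->
      0 <= conf (Phi n k) q <= 1)
  (Hpos_exists : forall n, (n < N)%nat -> exists k, label (Phi n k) = true)
  (Hlim : forall n al au, (n < N)%nat -> 0 < al < au -> au < 1 ->
      Un_cv (utility L (Phi n) al au) (Ubar n al au))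
  (Hgt0 : forall n al au, (n < N)%nat -> 0 < al < au -> au < 1 ->
      0 < Ubar n al au) :
  (forall (al au al' : nat -> R) (m : nat),
      admissible N al au -> admissible N al' au ->
      (forall n, n <> m -> al' n = al n) -> al m <= al' m ->
      objective N rho Ubar al' au <= objective N rho Ubar al au)
  /\
  (forall (al au au' : nat -> R) (m : nat),
      admissible N al au -> admissible N al au' ->
      (forall n, n <> m -> au' n = au n) -> au m <= au' m ->
      objective N rho Ubar al au' <= objective N rho Ubar al au).
Proof.
  split.
  - intros al au al' m Hadm Hadm' Hother Hm.
    apply (objective_antimono N L rho Phi Ubar Hrho Hlim Hgt0); try assumption.
    + exact (le_of_single_increase al al' m Hother Hm).
    + intro; apply Rle_refl.
  - intros al au au' m Hadm Hadm' Hother Hm.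
    apply (objective_antimono N L rho Phi Ubar Hrho Hlim Hgt0); try assumption.
    + intro; apply Rle_refl.
    + exact (le_of_single_increase au au' m Hother Hm).
Qed.
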